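(* Let $n$ be a nonnegative integer and $a,c\in\mathbb{C}$ such that all expressions below are defined (no lower parameter zero or a negative integer). Then \[ \left[{}_3F_2\!\left(\left.{a,a-c-n,c \atop \frac{a-n}{2},\frac{1+a-n}{2}}\right| \frac{1}{4}\right)\right]_n =\frac{(1+c-a)_n(1+c)_n}{n!\,(1-a)_n}\,{}_4F_3\!\left(\left.{-n,1+c+n,c,1 \atop \frac{1+c}{2},\frac{2+c}{2},1+c-a}\right| \frac{1}{4}\right). \]
   Context: For $a\in\mathbb{C}$, $(a)_0=1$ and $(a)_k=a(a+1)\cdots(a+k-1)$ for $k\ge1$. The hypergeometric series is ${}_rF_s\!\left(\left.{\alpha_1,\ldots,\alpha_r\atop \beta_1,\ldots,\beta_s}\right|z\right)=\sum_{k\ge0}\frac{(\alpha_1)_k\cdots(\alpha_r)_k}{k!(\beta_1)_k\cdots(\beta_s)_k}z^k$, with no lower parameter zero or a negative integer; it is a finite sum when an upper parameter is $-n$. The bracket $\left[{}_rF_s(\cdots|z)\right]_n$ denotes the sum of the first $n+1$ terms, $\sum_{k=0}^{n}\frac{(\alpha_1)_k\cdots(\alpha_r)_k}{k!(\beta_1)_k\cdots(\beta_s)_k}z^k$. *)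

From HB Require Import structures.
From mathcomp Require Import all_boot all_order all_algebra.
From mathcomp Require Import complex.
From mathcomp Require Import reals.
Set Implicit Arguments. Unset Strict Implicit. Unset Printing Implicit Defensive.
Import Order.TTheory GRing.Theory Num.Theory.
Local Open Scope ring_scope.

Definition poch {F : pzRingType} (a : F) (k : nat) : F :=
  \prod_(i < k) (a + i%:R).

Definition hypTerm {F : fieldType} (alphas betas : seq F) (z : F) (k : nat) : F :=
  (\prod_(x <- alphas) poch x k) / (k`!%:R * \prod_(b <- betas) poch b k) * z ^+ k.

(* [ rFs(alphas; betas | z) ]_n : the sum of the first n+1 terms. *)
Definition hypTrunc {F : fieldType} (alphas betas : seq F) (z : F) (n : nat) : F :=
  \sum_(k < n.+1) hypTerm alphas betas z k.

Definition admissible_lower {F : pzRingType} (b : F) : Prop :=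
  forall m : nat, b <> - m%:R.

From HB Require Import structures.
From mathcomp Require Import all_boot all_order all_algebra.
From mathcomp Require Import complex.
From mathcomp Require Import reals.
From mathcomp Require Import ring zify.
Import Order.TTheory GRing.Theory Num.Theory.
Local Open Scope ring_scope.

(* Put d = a - n and b = a - c - n, so that b + c = d and a = d + n.  The
   duplication formula (x/2)_k ((x+1)/2)_k 4^k = (x)_(2k) and
   (d)_(2k) (d+2k)_(n-k) = (d)_n (d+n)_k turn the left-hand side into
   (d)_n^-1 * sum_k (b)_k (c)_k (b+c+2k)_(n-k) / k!.  Expanding (b+c+2k)_(n-k)
   by Chu-Vandermonde, exchanging the two sums and contracting again by
   Chu-Vandermonde gives sum_j (b)_j / j! (c)_(n-j) (c+2(n-j)+1)_j.  The same
   formulas, with (-n)_j = (-1)^j n! / (n-j)! and (1-a)_n = (-1)^n (d)_n,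
   reduce the right-hand side to (d)_n^-1 times this sum read backwards. *)

Section Pochhammer.
Context {F : comNzRingType}.
Implicit Types x y : F.

Lemma poch0 x : poch x 0 = 1.
Proof. by rewrite /poch big_ord0. Qed.

Lemma pochS x k : poch x k.+1 = poch x k * (x + k%:R).
Proof. by rewrite /poch big_ord_recr. Qed.

Lemma pochSl x k : poch x k.+1 = x * poch (x + 1) k.
Proof.
rewrite /poch big_ord_recl addr0; congr (_ * _); apply: eq_bigr => i _.
by rewrite /= /bump /= add1n -nat1r addrA.
Qed.

Lemma pochD x m k : poch x (m + k) = poch x m * poch (x + m%:R) k.
Proof.
elim: k => [|k IHk]; first by rewrite addn0 poch0 mulr1.
by rewrite addnS !pochS IHk natrD addrA mulrA.
Qed.

Lemma poch_opp x j : poch (- x) j = (-1) ^+ j * poch (x - j%:R + 1) j.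
Proof.
elim: j => [|j IHj]; first by rewrite !poch0 expr0 mulr1.
rewrite pochS IHj pochSl exprS -natr1.
have -> : x - (j%:R + 1) + 1 + 1 = x - j%:R + 1 by ring.
ring.
Qed.

Lemma poch_vandermonde x y m :
  poch (x + y) m = \sum_(i < m.+1) 'C(m, i)%:R * (poch x i * poch y (m - i)).
Proof.
elim: m => [|m IHm]; first by rewrite big_ord1 bin0 !poch0 !mul1r.
have split_step (i : 'I_m.+1) :
    'C(m, i)%:R * (poch x i * poch y (m - i)) * (x + y + m%:R)
  = 'C(m, i)%:R * (poch x i.+1 * poch y (m - i))
    + 'C(m, i)%:R * (poch x i * poch y (m.+1 - i)).
  have le_im : (i <= m)%N := ltnSE (ltn_ord i).
  have -> : x + y + m%:R = (x + i%:R) + (y + (m - i)%:R) by rewrite natrB //; ring.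
  by rewrite subSn // !pochS; ring.
have shift_y : \sum_(i < m.+1) 'C(m, i)%:R * (poch x i * poch y (m.+1 - i))
    = poch y m.+1 + \sum_(i < m.+1) 'C(m, i.+1)%:R * (poch x i.+1 * poch y (m - i)).
  transitivity (\sum_(i < m.+2) 'C(m, i)%:R * (poch x i * poch y (m.+1 - i))).
    by rewrite [RHS]big_ord_recr /= bin_small // mul0r addr0.
  by rewrite big_ord_recl /= bin0 subn0 poch0 !mul1r.
rewrite pochS IHm big_distrl (eq_bigr _ (fun i _ => split_step i)) big_split /= shift_y.
symmetry; rewrite big_ord_recl /= bin0 subn0 poch0 !mul1r.
under eq_bigr => i _ do rewrite /bump /= add1n binS natrD mulrDl subSS.
by rewrite big_split /= addrA addrC.
Qed.

End Pochhammer.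

Lemma exchange_big_triangle (M : nmodType) n (H : nat -> nat -> M) :
  \sum_(k < n.+1) \sum_(i < (n - k).+1) H k (k + i)%N
  = \sum_(j < n.+1) \sum_(k < j.+1) H k j.
Proof.
have row (k : 'I_n.+1) :
    \sum_(i < (n - k).+1) H k (k + i)%N = \sum_(j < n.+1 | (k <= j)%N) H k j.
  transitivity (\sum_(0 + k <= j < n.+1) H k j); last by rewrite big_geq_mkord.
  rewrite big_addn big_mkord subSn ?(ltnSE (ltn_ord k)) //.
  by apply: eq_bigr => i _; rewrite addnC.
have column (j : 'I_n.+1) :
    \sum_(k < j.+1) H k j = \sum_(k < n.+1 | (k <= j)%N) H k j.
  exact: (big_ord_widen _ (H^~ j) (ltn_ord j)).
rewrite (eq_bigr _ (fun k _ => row k)) (eq_bigr _ (fun j _ => column j)).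
exact: exchange_big_dep.
Qed.

Section CharacteristicZero.
Context {F : numFieldType}.
Implicit Types x b c : F.

Lemma natr_fact_neq0 m : (m`!%:R : F) != 0.
Proof. by rewrite pnatr_eq0 -lt0n fact_gt0. Qed.

Lemma poch_natS m l : poch (m.+1%:R : F) l = (m + l)`!%:R / m`!%:R.
Proof.
elim: l => [|l IHl]; first by rewrite poch0 addn0 divff ?natr_fact_neq0.
rewrite pochS IHl addnS factS natrM -addSn natrD.
by field; rewrite natr_fact_neq0.
Qed.

Lemma poch1 l : poch (1 : F) l = l`!%:R.
Proof. by rewrite (poch_natS 0) add0n fact0 divr1. Qed.

Lemma poch_oppn n j : (j <= n)%N -> poch (- n%:R : F) j = (-1) ^+ j * n`!%:R / (n - j)`!%:R.
Proof.
move=> le_jn; rewrite poch_opp (_ : n%:R - j%:R + 1 = (n - j).+1%:R :> F).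
  by rewrite poch_natS subnK // mulrA.
by rewrite -natr1 natrB.
Qed.

Lemma natr_binE m k : (k <= m)%N ->
  ('C(m, k)%:R : F) = m`!%:R / (k`!%:R * (m - k)`!%:R).
Proof.
move=> le_km; rewrite -(bin_fact le_km) !natrM mulfK //.
by rewrite mulf_neq0 ?natr_fact_neq0.
Qed.

Lemma poch_duplication x k :
  poch (x / 2) k * poch ((x + 1) / 2) k * 4%:R ^+ k = poch x (2 * k).
Proof.
elim: k => [|k IHk]; first by rewrite !poch0 expr0 !mulr1.
by rewrite mulnS add2n !pochS -IHk exprS -!natr1 natrM; field.
Qed.

Lemma admissible_poch_neq0 {x} : admissible_lower x -> forall j, poch x j != 0.
Proof.
move=> adm_x j; apply/prodf_neq0 => i _; apply/eqP => x_i0.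
by apply: (adm_x i); rewrite -(subr0 x) -x_i0; ring.
Qed.

Lemma admissible_halves {x} :
  admissible_lower (x / 2) -> admissible_lower ((x + 1) / 2) -> admissible_lower x.
Proof.
move=> adm_half adm_half1 m x_m; have := odd_double_half m.
rewrite -muln2; move: m./2 => q; case: (odd m) => /= m_eq.
- by apply: (adm_half1 q); rewrite x_m -m_eq natrD natrM; field.
- by apply: (adm_half q); rewrite x_m -m_eq add0n natrM; field.
Qed.

Lemma sum_poch_exchange b c n :
  \sum_(k < n.+1) poch b k * poch c k * poch (b + c + (2 * k)%:R) (n - k) / k`!%:R
  = \sum_(j < n.+1) poch b j / j`!%:R * poch c (n - j)
      * poch (c + (n - j)%:R + (n - j).+1%:R) j.
Proof.
pose H k j := 'C(n - k, j - k)%:R / k`!%:R * poch b j * poch c (n - j + k).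
transitivity (\sum_(k < n.+1) \sum_(i < (n - k).+1) H k (k + i)%N).
  apply: eq_bigr => k _; have le_kn : (k <= n)%N := ltnSE (ltn_ord k).
  have -> : b + c + (2 * k)%:R = (b + k%:R) + (c + k%:R) by rewrite natrM; ring.
  rewrite poch_vandermonde !big_distrr big_distrl /=; apply: eq_bigr => i _.
  have le_i : (i <= n - k)%N := ltnSE (ltn_ord i).
  rewrite /H (_ : (k + i - k = i)%N) ?addKn //.
  rewrite (_ : (n - (k + i) + k = k + (n - k - i))%N); last by lia.
  by rewrite !pochD; ring.
rewrite exchange_big_triangle; apply: eq_bigr => j _.
have le_jn : (j <= n)%N := ltnSE (ltn_ord j).
rewrite poch_vandermonde !big_distrr /=; apply: eq_bigr => k _.
have le_kj : (k <= j)%N := ltnSE (ltn_ord k).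
rewrite /H pochD poch_natS (_ : (n - j + (j - k) = n - k)%N); last by lia.
rewrite !natr_binE ?leq_sub2r // (_ : (n - k - (j - k) = n - j)%N); last by lia.
by field; rewrite !natr_fact_neq0.
Qed.

Lemma sum_poch_rev a b c n : a = b + c + n%:R ->
  \sum_(j < n.+1) (-1) ^+ j * poch c j * poch (1 + c + (2 * j)%:R) (n - j)
     * poch (1 + c - a + j%:R) (n - j) / (n - j)`!%:R
  = (-1) ^+ n * \sum_(i < n.+1) poch b i / i`!%:R * poch c (n - i)
      * poch (c + (n - i)%:R + (n - i).+1%:R) i.
Proof.
move=> a_eq; rewrite big_distrr (reindex_inj rev_ord_inj); apply: eq_bigr => i _.
have le_in : (i <= n)%N := ltnSE (ltn_ord i).
rewrite /= subSS subKn //.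
have -> : 1 + c + (2 * (n - i))%:R = c + (n - i)%:R + (n - i).+1%:R.
  by rewrite -natr1 natrM; ring.
have -> : 1 + c - a + (n - i)%:R = - (b + i%:R - 1) by rewrite a_eq natrB //; ring.
rewrite poch_opp (_ : b + i%:R - 1 - i%:R + 1 = b); last by ring.
have sign_split : (-1) ^+ n = (-1) ^+ (n - i) * (-1) ^+ i :> F by rewrite -exprD subnK.
by rewrite sign_split; ring.
Qed.

Lemma hypTrunc_3F2E a b c n : a = b + c + n%:R ->
  admissible_lower ((a - n%:R) / 2) -> admissible_lower ((1 + a - n%:R) / 2) ->
  hypTrunc [:: a; b; c] [:: (a - n%:R) / 2; (1 + a - n%:R) / 2] 4%:R^-1 n
  = (poch (a - n%:R) n)^-1 * \sum_(k < n.+1)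
      poch b k * poch c k * poch (b + c + (2 * k)%:R) (n - k) / k`!%:R.
Proof.
move=> a_eq; rewrite (_ : 1 + a - n%:R = a - n%:R + 1); last by ring.
set d := a - n%:R => adm_half adm_half1.
have poch_d := admissible_poch_neq0 (admissible_halves adm_half adm_half1).
have poch_half := admissible_poch_neq0 adm_half.
have poch_half1 := admissible_poch_neq0 adm_half1.
rewrite /hypTrunc mulr_sumr; apply: eq_bigr => k _; have le_kn : (k <= n)%N := ltnSE (ltn_ord k).
rewrite /hypTerm !big_cons !big_nil.
have poch_tail : poch (b + c + (2 * k)%:R) (n - k) = poch a k * poch d n / poch d (2 * k).
  rewrite (_ : a = d + n%:R); last by rewrite /d; ring.
  rewrite [poch (d + _) k * _]mulrC -pochD (_ : (n + k = 2 * k + (n - k))%N); last by lia.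
  rewrite pochD mulrC mulKf //; congr poch; rewrite /d a_eq natrM; ring.
rewrite poch_tail -poch_duplication exprVn; field.
by rewrite natr_fact_neq0 expf_neq0 ?pnatr_eq0 ?poch_half ?poch_half1 ?poch_d.
Qed.

Lemma hypTrunc_4F3E c e n :
  admissible_lower ((1 + c) / 2) -> admissible_lower ((2 + c) / 2) -> admissible_lower e ->
  poch e n * poch (1 + c) n / n`!%:R
    * hypTrunc [:: - n%:R; 1 + c + n%:R; c; 1] [:: (1 + c) / 2; (2 + c) / 2; e] 4%:R^-1 n
  = \sum_(j < n.+1) (-1) ^+ j * poch c j * poch (1 + c + (2 * j)%:R) (n - j)
      * poch (e + j%:R) (n - j) / (n - j)`!%:R.
Proof.
rewrite (_ : 2 + c = 1 + c + 1); last by ring.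
move=> adm_half adm_half1 adm_e.
have poch_c1 := admissible_poch_neq0 (admissible_halves adm_half adm_half1).
have poch_half := admissible_poch_neq0 adm_half.
have poch_half1 := admissible_poch_neq0 adm_half1.
have poch_e := admissible_poch_neq0 adm_e.
rewrite /hypTrunc mulr_sumr; apply: eq_bigr => j _; have le_jn : (j <= n)%N := ltnSE (ltn_ord j).
rewrite /hypTerm !big_cons !big_nil.
have poch_e_split : poch e n = poch e j * poch (e + j%:R) (n - j) by rewrite -pochD subnKC.
have poch_top : poch (1 + c + n%:R) j
    = poch (1 + c) (2 * j) * poch (1 + c + (2 * j)%:R) (n - j) / poch (1 + c) n.
  rewrite -pochD (_ : (2 * j + (n - j) = n + j)%N); last by lia.
  by rewrite pochD mulrAC divff ?mul1r.
rewrite poch_e_split poch_top poch_oppn // poch1 -poch_duplication exprVn; field.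
by rewrite !natr_fact_neq0 expf_neq0 ?pnatr_eq0 ?poch_e ?poch_half ?poch_half1 ?poch_c1.
Qed.

End CharacteristicZero.

Local Open Scope complex_scope.

Theorem mainTheorem15 (R : realType) (n : nat) (a c : R[i])
  (h1 : admissible_lower ((a - n%:R) / 2))
  (h2 : admissible_lower ((1 + a - n%:R) / 2))
  (h3 : admissible_lower ((1 + c) / 2))
  (h4 : admissible_lower ((2 + c) / 2))
  (h5 : admissible_lower (1 + c - a))
  (h6 : poch (1 - a) n != 0) :
  hypTrunc [:: a; a - c - n%:R; c] [:: (a - n%:R) / 2; (1 + a - n%:R) / 2] (4%:R^-1) n
  = poch (1 + c - a) n * poch (1 + c) n / (n`!%:R * poch (1 - a) n)
    * hypTrunc [:: - n%:R; 1 + c + n%:R; c; 1] [:: (1 + c) / 2; (2 + c) / 2; 1 + c - a]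
        (4%:R^-1) n.
Proof.
(* [h6] is redundant: (1 - a)_n = (-1)^n (a - n)_n is nonzero by [h1] and [h2]. *)
have a_eq : a = (a - c - n%:R) + c + n%:R by ring.
have poch_1a : poch (1 - a) n = (-1) ^+ n * poch (a - n%:R) n.
  by rewrite -opprB poch_opp; congr (_ * poch _ _); ring.
have poch_d : poch (a - n%:R) n != 0.
  rewrite (_ : 1 + a - n%:R = a - n%:R + 1) in h2; last by ring.
  exact: admissible_poch_neq0 (admissible_halves h1 h2) n.
rewrite hypTrunc_3F2E // sum_poch_exchange invfM mulrA mulrAC hypTrunc_4F3E //.
rewrite (sum_poch_rev _ _ _ _ a_eq) poch_1a.
by field; rewrite poch_d expf_neq0 // oppr_eq0 oner_eq0.
Qed.
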